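(* Let $\square$ be a cubical complex and $n \geq 0$. Then $\square$ embeds into $I^n$ (i.e. there is an injective map of cubical complexes $V(\square) \to V(I^n)$) if and only if the graph $G(\square)$ embeds into the graph $G(I^n)$, i.e. there is an injective map $V(\square) \to V(I^n)$ sending every edge of $\square$ to an edge of $I^n$.
   Context: A cubical complex consists of a finite vertex set $V$ and a collection $\square$ of nonempty subsets of $V$ (faces) such that: every singleton $\{v\}$, $v\in V$, is a face; for each face $F$ the poset $\hat F=\{G\in\square : G\subseteq F\}$ (ordered by inclusion) is isomorphic to the poset of nonempty faces of a cube (whose dimension is $\dim F$); and the intersection of two faces is empty or a face. $I^n$ denotes the $n$-cube as a cubical complex: vertex set $\{0,1\}^n$, and faces indexed by $(p_1,\dots,p_n)\in\{0,1,*\}^n$, the face being the set of $x\in\{0,1\}^n$ with $x_i=p_i$ whenever $p_i\neq *$. A map of cubical complexes is a function between vertex sets sending each face onto a face; an injective map is an embedding. The graph $G(\square)$ is the 1-skeleton: vertices and 1-dimensional faces (edges). *)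

From mathcomp Require Import all_boot.
Set Implicit Arguments. Unset Strict Implicit. Unset Printing Implicit Defensive.

Definition cube_vert (n : nat) : finType := {ffun 'I_n -> bool}.

(* The face of I^n indexed by p in {0,1,*}^n (None = * ) *)
Definition cube_face (n : nat) (p : {ffun 'I_n -> option bool}) : {set cube_vert n} :=
  [set x : cube_vert n | [forall i, if p i is Some b then x i == b else true]].

Definition cube_faces (n : nat) : {set {set cube_vert n}} :=
  [set cube_face p | p : {ffun 'I_n -> option bool}].

Definition face_below (V : finType) (faces : {set {set V}}) (F : {set V}) : {set {set V}} :=
  [set G in faces | G \subset F].

Definition face_has_dim (V : finType) (faces : {set {set V}}) (F : {set V}) (d : nat) : Prop :=
  exists phi : {set V} -> {set cube_vert d},
    [/\ {in face_below faces F &, injective phi},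
        phi @: face_below faces F = cube_faces d
      & {in face_below faces F &, forall G H : {set V}, (G \subset H) = (phi G \subset phi H)}].

Definition cubical_complex (V : finType) (faces : {set {set V}}) : Prop :=
  [/\ forall F, F \in faces -> F != set0,
      forall v : V, [set v] \in faces,
      forall F, F \in faces -> exists d, face_has_dim faces F d
    & forall F G, F \in faces -> G \in faces -> F :&: G = set0 \/ F :&: G \in faces].

Definition cc_map (V W : finType) (facesV : {set {set V}}) (facesW : {set {set W}})
  (f : V -> W) : Prop :=
  forall F, F \in facesV -> f @: F \in facesW.

Definition cc_edge (V : finType) (faces : {set {set V}}) (E : {set V}) : Prop :=
  E \in faces /\ face_has_dim faces E 1.

Definition graph_map (V W : finType) (facesV : {set {set V}}) (facesW : {set {set W}})
  (f : V -> W) : Prop :=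
  forall E, cc_edge facesV E -> cc_edge facesW (f @: E).

From mathcomp Require Import all_boot.
Set Implicit Arguments. Unset Strict Implicit. Unset Printing Implicit Defensive.

(* Embedding => graph embedding: an edge is a two-element face {a, b}; an
   injective map of complexes sends it onto a two-element face of I^n, and
   two-element faces are 1-dimensional, i.e. edges.

   Graph embedding => embedding: a d-dimensional face F is the injective
   image of I^d under a map h whose coordinate edges {h x, h (flip x i)}
   are edges of the complex (read off from the order isomorphism between
   the faces below F and the faces of I^d).  For an injective graph map f,
   g = f o h is an injective map I^d -> I^n sending edges to edges.  Such a
   map is rigid: by induction on the Hamming weight, going around the
   squares of I^d, flipping coordinate i always flips the same coordinate
   k i of the image.  So g is the coordinate embedding
   x |-> g 0 + sum_i x_i e_(k i), whose image f(F) is a face of I^n. *)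

Section Flips.
Variable n : nat.
Implicit Types (x u : cube_vert n) (i j p q s t : 'I_n).

Definition flip x i : cube_vert n := [ffun j => x j (+) (j == i)].

Lemma flipE x i j : flip x i j = x j (+) (j == i).
Proof. by rewrite ffunE. Qed.

Lemma flipK x i : flip (flip x i) i = x.
Proof. by apply/ffunP => j; rewrite !flipE -addbA addbb addbF. Qed.

Lemma flipC x i j : flip (flip x i) j = flip (flip x j) i.
Proof. by apply/ffunP => l; rewrite !flipE -!addbA (addbC (l == i)). Qed.

Lemma flip_inj x i j : flip x i = flip x j -> i = j.
Proof.
move/ffunP/(_ i); rewrite !flipE eqxx.
by case: (eqVneq i j) => // _; case: (x i).
Qed.

Lemma flip_neq x i : flip x i != x.
Proof. by apply/eqP => /ffunP/(_ i); rewrite flipE eqxx addbT; case: (x i). Qed.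

(* Two paths of length 2 from [u] in directions [p, s] and [q, t] with
   [p != q] can only end at the same vertex if they go around a square,
   so the second step [s] of the first path is [p] or [q]. *)
Lemma flip_square u p q s t : p != q ->
  flip (flip u p) s = flip (flip u q) t -> s = p \/ s = q.
Proof.
move=> npq /ffunP E; move: (E p) (E q); rewrite !flipE !eqxx.
case: (eqVneq s p) => [->|_]; first by left.
case: (eqVneq s q) => [->|_]; first by right.
rewrite (negbTE npq) (eq_sym q p) (negbTE npq) !addbF.
case: (eqVneq p t) => [<-|_]; last by case: (u p).
by rewrite (eq_sym q p) (negbTE npq); case: (u q).
Qed.

Definition cube0 : cube_vert n := [ffun => false].
Definition weight x := #|[set i | x i]|.

Lemma cube0E x : (forall i, x i = false) -> x = cube0.
Proof. by move=> x0; apply/ffunP => i; rewrite x0 ffunE. Qed.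

Lemma weight_flip x i : x i -> weight (flip x i) < weight x.
Proof.
move=> xi; rewrite /weight (cardsD1 i [set j | x j]) inE xi.
suff -> : [set j | flip x i j] = [set j | x j] :\ i by [].
apply/setP => j; rewrite !inE flipE.
by case: (eqVneq j i) => [->|]; rewrite ?xi //= addbF.
Qed.

Lemma cube_ind (P : cube_vert n -> Prop) :
  P cube0 -> (forall x i, x i = false -> P x -> P (flip x i)) -> forall x, P x.
Proof.
move=> P0 Pflip x; have [m] := ubnP (weight x); elim: m x => // m IH x.
rewrite ltnS => wx; case: (pickP [pred i | x i]) => [i /= xi | none].
  rewrite -(flipK x i); apply: Pflip; first by rewrite flipE eqxx xi.
  exact/IH/(leq_trans (weight_flip xi)).
by rewrite (cube0E none).
Qed.

End Flips.
Arguments cube0 {n}.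

Section CubeFaces.
Variable n : nat.
Implicit Types (x u w : cube_vert n) (i : 'I_n).

Lemma cube_face_neq0 F : F \in cube_faces n -> F != set0.
Proof.
case/imsetP => p _ ->; apply/set0Pn.
exists [ffun i => if p i is Some b then b else false]; rewrite inE.
by apply/forallP => i; rewrite ffunE; case: (p i).
Qed.

Lemma cube_face1 x : [set x] \in cube_faces n.
Proof.
apply/imsetP; exists [ffun i => Some (x i)] => //.
apply/setP => y; rewrite !inE; apply/eqP/forallP => [-> i | yx].
  by rewrite ffunE.
by apply/ffunP => i; move: (yx i); rewrite ffunE => /eqP.
Qed.

(* Each coordinate edge {x, flip x i} is a face of I^n: fix every
   coordinate except [i]. *)
Lemma cube_face_flip x i : [set x; flip x i] \in cube_faces n.
Proof.
apply/imsetP; exists [ffun j => if j == i then None else Some (x j)] => //.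
apply/setP => y; rewrite !inE; apply/idP/forallP.
  case/orP => /eqP-> j; rewrite ffunE; case: (eqVneq j i) => //= ji.
  by rewrite flipE (negbTE ji) addbF.
move=> yx; have yxE j : j != i -> y j = x j.
  by move=> ji; move: (yx j); rewrite ffunE (negbTE ji) => /eqP.
case: (eqVneq (y i) (x i)) => yxi; apply/orP; [left | right]; apply/eqP/ffunP => j.
  by case: (eqVneq j i) => [->|/yxE].
rewrite flipE; case: (eqVneq j i) => [-> | /yxE ->]; last by rewrite addbF.
by move: yxi; case: (y i); case: (x i).
Qed.

(* Conversely, a two-element face of I^n is a coordinate edge: the two
   vertices differ in a free coordinate [k], and flipping [k] stays in the
   face, which contains only the two vertices. *)
Lemma cube_face2_flip u w :
  [set u; w] \in cube_faces n -> u != w -> exists k, w = flip u k.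
Proof.
case/imsetP => p _ Ep uw.
have [k ukw] : exists k, u k != w k.
  apply/existsP; apply: contraR uw => /existsPn uwE; apply/eqP/ffunP => k.
  by apply/eqP; move: (uwE k); rewrite negbK.
have uF : u \in cube_face p by rewrite -Ep !inE eqxx.
have wF : w \in cube_face p by rewrite -Ep !inE eqxx orbT.
have pfree j : u j != w j -> p j = None.
  move: uF wF; rewrite !inE => /forallP/(_ j) + /forallP/(_ j).
  by case: (p j) => // b /eqP-> /eqP->; rewrite eqxx.
have : flip u k \in cube_face p.
  rewrite inE; apply/forallP => j; move: uF; rewrite inE => /forallP/(_ j).
  rewrite flipE; case: (eqVneq j k) => [->|]; first by rewrite (pfree k ukw).
  by rewrite addbF.
rewrite -Ep !inE => /orP[/eqP/ffunP/(_ k) | /eqP <-]; last by exists k.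
by rewrite flipE eqxx; case: (u k).
Qed.

End CubeFaces.

Lemma cube1_cases (y : cube_vert 1) : y = cube0 \/ y = flip cube0 ord0.
Proof.
case y0: (y ord0); [right | left]; apply/ffunP => i;
  by rewrite !ord1 ?flipE ?ffunE y0.
Qed.

Lemma cube1_setT : [set: cube_vert 1] = [set cube0; flip cube0 ord0].
Proof. by apply/setP => y; rewrite !inE; case: (cube1_cases y) => ->; rewrite eqxx ?orbT. Qed.

Section CoordinateEmbedding.
Variables (d n : nat) (c : cube_vert n) (k : 'I_d -> 'I_n).

Definition coord_embed (x : cube_vert d) : cube_vert n :=
  [ffun j => c j (+) (if [pick i | k i == j] is Some i then x i else false)].

Lemma coord_embed0 : coord_embed cube0 = c.
Proof.
by apply/ffunP => j; rewrite !ffunE; case: pickP => [i _|_]; rewrite ?ffunE addbF.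
Qed.

Lemma coord_embed_flip x i :
  injective k -> coord_embed (flip x i) = flip (coord_embed x) (k i).
Proof.
move=> k_inj; apply/ffunP => j; rewrite flipE !ffunE.
case: pickP => [i' /eqP <- | nok]; first by rewrite flipE (inj_eq k_inj) addbA.
by rewrite eq_sym (nok i) !addbF.
Qed.

Lemma coord_embed_face : coord_embed @: setT \in cube_faces n.
Proof.
pose p : {ffun 'I_n -> option bool} :=
  [ffun j => if [pick i | k i == j] is Some _ then None else Some (c j)].
apply/imsetP; exists p => //; apply/setP => y; apply/imsetP/idP.
  move=> [x _ ->]; rewrite inE; apply/forallP => j; rewrite !ffunE.
  by case: pickP => [i _|_] //=; rewrite addbF.
rewrite inE => /forallP yp; exists [ffun i => y (k i) (+) c (k i)] => //.
apply/ffunP => j; rewrite ffunE; move: (yp j); rewrite ffunE.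
case: pickP => [i /eqP <- _ | _ /eqP -> ] /=; last by rewrite addbF.
by rewrite ffunE addbC -addbA addbb addbF.
Qed.

End CoordinateEmbedding.

Section Rigidity.
Variables (d n : nat) (g : cube_vert d -> cube_vert n).
Hypothesis g_inj : injective g.
Implicit Types (x a : cube_vert d) (i j : 'I_d).
Hypothesis g_edge : forall x i, exists k, g (flip x i) = flip (g x) k.

Lemma edge_dir_ex i : exists k, g (flip cube0 i) == flip (g cube0) k.
Proof. by have [k ->] := g_edge cube0 i; exists k. Qed.

Definition edge_dir i : 'I_n := xchoose (edge_dir_ex i).

Lemma edge_dirE i : g (flip cube0 i) = flip (g cube0) (edge_dir i).
Proof. exact/eqP/(xchooseP (edge_dir_ex i)). Qed.

Lemma edge_dir_inj : injective edge_dir.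
Proof.
by move=> i j dij; apply: (@flip_inj _ cube0); apply: g_inj; rewrite !edge_dirE dij.
Qed.

(* Going from [a] to [flip (flip a j) i], the two routes
   around the square of I^d must close up in I^n, which forces the last
   direction to be [edge_dir i] (the alternative would make [g] collapse
   the square's diagonal). *)
Lemma edge_dir_raise x i : x i = false -> g (flip x i) = flip (g x) (edge_dir i).
Proof.
elim/cube_ind: x i => [i _ | a j aj IH i]; first exact: edge_dirE.
rewrite flipE => ai_j.
have ij : i != j by apply: contraFneq _ ai_j => ->; rewrite aj eqxx.
have ai : a i = false by rewrite (negbTE ij) addbF in ai_j.
have [s gs] := g_edge (flip a j) i; have [t gt] := g_edge (flip a i) j.
rewrite (IH j aj) in gs; rewrite flipC (IH i ai) in gt.
have dji : edge_dir j != edge_dir i by rewrite (inj_eq edge_dir_inj) eq_sym.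
rewrite (IH j aj) gs; case: (flip_square dji (etrans (esym gs) gt)) => [sj | -> //].
move: gs; rewrite sj flipK -{2}(flipK a j) => /g_inj/flip_inj ji.
by rewrite ji eqxx in ij.
Qed.

Lemma edge_dir_flip x i : g (flip x i) = flip (g x) (edge_dir i).
Proof.
case xi: (x i); last exact: edge_dir_raise.
rewrite -{2}(flipK x i) (@edge_dir_raise (flip x i)) ?flipK //.
by rewrite flipE eqxx xi.
Qed.

Lemma rigid_coord_embed : g =1 coord_embed (g cube0) edge_dir.
Proof.
elim/cube_ind => [| x i _ gx]; first by rewrite coord_embed0.
by rewrite edge_dir_flip gx coord_embed_flip //; apply: edge_dir_inj.
Qed.

Lemma rigid_image_face : g @: setT \in cube_faces n.
Proof. by rewrite (eq_imset _ rigid_coord_embed) coord_embed_face. Qed.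

End Rigidity.

Definition nonempty_subsets (T : finType) (A : {set T}) : {set {set T}} :=
  [set G : {set T} | (G != set0) && (G \subset A)].

(* An injection [r : U -> T] identifies, by taking preimages, the poset of
   nonempty subsets of its range with the poset of nonempty subsets of [U]. *)
Lemma nonempty_subsets_iso (T U : finType) (r : U -> T) : injective r ->
  exists phi : {set T} -> {set U},
    [/\ {in nonempty_subsets (r @: setT) &, injective phi},
        phi @: nonempty_subsets (r @: setT) = nonempty_subsets setT
      & {in nonempty_subsets (r @: setT) &, forall G H : {set T},
           (G \subset H) = (phi G \subset phi H)}].
Proof.
move=> r_inj; exists (fun G : {set T} => r @^-1: G).
have mono : {in nonempty_subsets (r @: setT) &, forall G H : {set T},
              (G \subset H) = (r @^-1: G \subset r @^-1: H)}.
  move=> G H; rewrite inE => /andP[_ /subsetP Gr] _.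
  apply/idP/idP => [/preimsetS // | /subsetP GH]; apply/subsetP => v vG.
  have [u _ uv] := imsetP (Gr v vG); rewrite uv in vG *.
by move: (GH u); rewrite !inE; apply.
split=> // [G H GS HS rGH | ].
  by apply/eqP; rewrite eqEsubset !mono // rGH subxx.
apply/setP => Y; apply/imsetP/idP => [[G] | ].
  rewrite !inE subsetT andbT => /andP[/set0Pn[v vG] /subsetP Gr] ->.
  by have [u _ uv] := imsetP (Gr v vG); apply/set0Pn; exists u; rewrite inE -uv.
rewrite inE subsetT andbT => /set0Pn[u uY]; exists (r @: Y).
  rewrite inE imsetS ?subsetT // andbT; apply/set0Pn; exists (r u).
  exact: imset_f.
by apply/setP => v; rewrite inE mem_imset.
Qed.

Lemma subset_pair_cases (T : finType) (a b : T) (G : {set T}) :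
  G != set0 -> G \subset [set a; b] ->
  [\/ G = [set a], G = [set b] | G = [set a; b]].
Proof.
move=> /set0Pn[v vG] /subsetP Gab.
have Gab' x : x \in G -> x = a \/ x = b by move/Gab/set2P.
case aG: (a \in G); case bG: (b \in G).
- constructor 3; apply/setP => x; rewrite !inE.
  by apply/idP/orP => [/Gab'[]-> | []/eqP->]; [left | right | |].
- constructor 1; apply/setP => x; rewrite inE.
  by apply/idP/eqP => [xG | ->//]; case: (Gab' x xG) => // xb; rewrite -xb xG in bG.
- constructor 2; apply/setP => x; rewrite inE.
  by apply/idP/eqP => [xG | ->//]; case: (Gab' x xG) => // xa; rewrite -xa xG in aG.
- by case: (Gab' v vG) => va; rewrite -va vG in aG bG.
Qed.

Lemma face_below_pair (V : finType) (faces : {set {set V}}) (a b : V) :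
  (forall F, F \in faces -> F != set0) ->
  [set a] \in faces -> [set b] \in faces -> [set a; b] \in faces ->
  face_below faces [set a; b] = nonempty_subsets [set a; b].
Proof.
move=> faces_neq0 fa fb fab; apply/setP => G; rewrite !inE.
apply/andP/andP => [[/faces_neq0 // ] | [G0 Gab]]; split=> //.
by case: (subset_pair_cases G0 Gab) => ->.
Qed.

(* A face with exactly two vertices is 1-dimensional: its face poset is that
   of I^1, i.e. of the nonempty subsets of a two-element set. *)
Lemma pair_face_dim1 (V : finType) (faces : {set {set V}}) (a b : V) :
  a != b -> (forall F, F \in faces -> F != set0) ->
  [set a] \in faces -> [set b] \in faces -> [set a; b] \in faces ->
  face_has_dim faces [set a; b] 1.
Proof.
move=> ab faces_neq0 fa fb fab.
pose r (y : cube_vert 1) := if y ord0 then b else a.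
have [r0 r1] : r cube0 = a /\ r (flip cube0 ord0) = b by rewrite /r flipE !ffunE.
have r_inj : injective r.
  move=> y z; case: (cube1_cases y) (cube1_cases z) => -> [] -> //;
  by rewrite r0 r1 => ba; rewrite ba eqxx in ab.
have r_range : r @: setT = [set a; b] by rewrite cube1_setT imsetU1 imset_set1 r0 r1.
have cube1_faces : cube_faces 1 = nonempty_subsets setT.
  rewrite cube1_setT -(face_below_pair (@cube_face_neq0 1)) ?cube_face1 ?cube_face_flip //.
  by apply/setP => G; rewrite inE -cube1_setT subsetT andbT.
rewrite /face_has_dim face_below_pair // -r_range cube1_faces.
exact: nonempty_subsets_iso.
Qed.

Section FaceParametrisation.
Variables (V : finType) (faces : {set {set V}}) (F : {set V}) (d : nat).
Variable phi : {set V} -> {set cube_vert d}.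
Hypothesis faces_neq0 : forall G, G \in faces -> G != set0.
Hypothesis faces1 : forall v : V, [set v] \in faces.
Hypothesis phi_image : phi @: face_below faces F = cube_faces d.
Hypothesis phi_mono : {in face_below faces F &, forall G H : {set V},
  (G \subset H) = (phi G \subset phi H)}.

Let below := face_below faces F.

Lemma below1 v : v \in F -> [set v] \in below.
Proof. by move=> vF; rewrite inE faces1 sub1set. Qed.

Lemma phi_below G : G \in below -> phi G \in cube_faces d.
Proof. by move=> GF; rewrite -phi_image imset_f. Qed.

Lemma phi_onto Y : Y \in cube_faces d -> exists2 G, G \in below & phi G = Y.
Proof. by rewrite -phi_image => /imsetP[G GF ->]; exists G. Qed.

(* Each vertex [x] of I^d is the image of a vertex of [F]: the minimal
   nonempty face [phi [set v]] below [phi G = {x}] must be {x} itself. *)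
Lemma param_ex x : exists v, (v \in F) && (phi [set v] == [set x]).
Proof.
have [G GF phiG] := phi_onto (cube_face1 x).
move: (GF); rewrite inE => /andP[/faces_neq0/set0Pn[v vG] GsubF].
have vF : v \in F := subsetP GsubF v vG.
exists v; rewrite vF /=.
have : phi [set v] \subset [set x] by rewrite -phiG -phi_mono ?sub1set ?below1.
rewrite subset1 => /orP[// | /eqP phiv0].
by have := cube_face_neq0 (phi_below (below1 vF)); rewrite phiv0 eqxx.
Qed.

Definition param x : V := xchoose (param_ex x).

Lemma param_in x : param x \in F.
Proof. by case/andP: (xchooseP (param_ex x)). Qed.

Lemma phi_param x : phi [set param x] = [set x].
Proof. by case/andP: (xchooseP (param_ex x)) => _ /eqP. Qed.

Lemma param_mem G x : G \in below -> x \in phi G -> param x \in G.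
Proof. by move=> GF xG; rewrite -sub1set phi_mono ?below1 ?param_in // phi_param sub1set. Qed.

Lemma param_onto w : w \in F -> exists2 y, y \in phi [set w] & param y = w.
Proof.
move=> wF; have [y yw] := set0Pn _ (cube_face_neq0 (phi_below (below1 wF))).
by exists y => //; apply/set1P; apply: param_mem (below1 wF) yw.
Qed.

Lemma param_inj : injective param.
Proof. by move=> x y xy; apply: set1_inj; rewrite -!phi_param xy. Qed.

Lemma param_image : param @: setT = F.
Proof.
apply/setP => w; apply/imsetP/idP => [[x _ ->] | wF]; first exact: param_in.
by have [y _ <-] := param_onto wF; exists y.
Qed.

(* The coordinate edges of I^d correspond to faces of the complex: the face
   [G] with [phi G = {x, flip x i}] is {param x, param (flip x i)}. *)
Lemma param_edge x i : [set param x; param (flip x i)] \in faces.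
Proof.
have [G GF phiG] := phi_onto (cube_face_flip x i).
suff -> : [set param x; param (flip x i)] = G by move: GF; rewrite inE => /andP[].
move: (GF); rewrite inE => /andP[_ GsubF].
apply/setP => w; apply/idP/idP.
  by case/set2P => ->; apply: param_mem; rewrite // phiG !inE eqxx ?orbT.
move=> wG; have [y yw <-] := param_onto (subsetP GsubF w wG).
have : phi [set w] \subset phi G by rewrite -phi_mono ?below1 ?sub1set ?(subsetP GsubF).
by move/subsetP/(_ y yw); rewrite phiG => /set2P[]->; rewrite !inE eqxx ?orbT.
Qed.

End FaceParametrisation.

Lemma face_param (V : finType) (faces : {set {set V}}) (F : {set V}) (d : nat) :
  (forall G, G \in faces -> G != set0) -> (forall v : V, [set v] \in faces) ->
  face_has_dim faces F d ->
  exists h : cube_vert d -> V,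
    [/\ injective h, h @: setT = F & forall x i, [set h x; h (flip x i)] \in faces].
Proof.
move=> faces_neq0 faces1 [phi [_ phi_image phi_mono]].
exists (param faces_neq0 faces1 phi_image phi_mono).
by split; [apply: param_inj | apply: param_image | apply: param_edge].
Qed.

Lemma edge_pair (V : finType) (faces : {set {set V}}) (E : {set V}) :
  cubical_complex faces -> cc_edge faces E -> exists a b, a != b /\ E = [set a; b].
Proof.
move=> [faces_neq0 faces1 _ _] [_ E_dim1].
have [h [h_inj h_image _]] := face_param faces_neq0 faces1 E_dim1.
exists (h cube0), (h (flip cube0 ord0)); split.
  by rewrite (inj_eq h_inj) eq_sym flip_neq.
by rewrite -h_image cube1_setT imsetU1 imset_set1.
Qed.

Lemma pair_edge (V : finType) (faces : {set {set V}}) (a b : V) :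
  (forall F, F \in faces -> F != set0) -> (forall v : V, [set v] \in faces) ->
  a != b -> [set a; b] \in faces -> cc_edge faces [set a; b].
Proof. by move=> faces_neq0 faces1 ab fab; split; last exact: pair_face_dim1. Qed.

(* An injective map of cubical complexes into I^n maps edges onto
   two-element faces, i.e. edges, of I^n. *)
Lemma cc_map_graph_map (V : finType) (faces : {set {set V}}) n (f : V -> cube_vert n) :
  cubical_complex faces -> injective f -> cc_map faces (cube_faces n) f ->
  graph_map faces (cube_faces n) f.
Proof.
move=> complex f_inj f_map E E_edge; have [E_face _] := E_edge.
have [a [b [ab E_ab]]] := edge_pair complex E_edge.
have := f_map E E_face; rewrite E_ab imsetU1 imset_set1 => fab.
by apply: pair_edge; rewrite ?(inj_eq f_inj) //; [exact: cube_face_neq0 | exact: cube_face1].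
Qed.

(* An injective graph map into I^n is a map of cubical complexes: on a face
   parametrised by [h : I^d -> F], the map [f \o h] sends coordinate edges
   to edges of I^n, so by rigidity its image is a face of I^n. *)
Lemma graph_map_cc_map (V : finType) (faces : {set {set V}}) n (f : V -> cube_vert n) :
  cubical_complex faces -> injective f -> graph_map faces (cube_faces n) f ->
  cc_map faces (cube_faces n) f.
Proof.
move=> [faces_neq0 faces1 faces_dim _] f_inj f_graph F F_face.
have [d F_dim] := faces_dim F F_face.
have [h [h_inj <- h_edge]] := face_param faces_neq0 faces1 F_dim.
rewrite -imset_comp; apply: rigid_image_face; first exact: inj_comp.
move=> x i; have hxi : h x != h (flip x i) by rewrite (inj_eq h_inj) eq_sym flip_neq.
have [fxi_face _] := f_graph _ (pair_edge faces_neq0 faces1 hxi (h_edge x i)).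
move: fxi_face; rewrite imsetU1 imset_set1 => /cube_face2_flip.
by rewrite (inj_eq f_inj) => /(_ hxi)[k fk]; exists k.
Qed.

Theorem mainTheorem1 (V : finType) (faces : {set {set V}}) (n : nat) :
  cubical_complex faces ->
  (exists f : V -> cube_vert n, injective f /\ cc_map faces (cube_faces n) f) <->
  (exists f : V -> cube_vert n, injective f /\ graph_map faces (cube_faces n) f).
Proof.
move=> complex; split=> -[f [f_inj f_map]]; exists f; split=> //.
  exact: cc_map_graph_map.
exact: graph_map_cc_map.
Qed.
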